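(* Let $T$ be a lifted graph, $F\colon T\to T$ a continuous sun-like map of degree 1, ${\cal P}$ a basic partition of $F$ and ${\cal G}$ its covering graph. (i) Let $\gamma_1,\gamma_2$ be two loops in ${\cal G}$ starting at the same vertex $\alpha$. If $r\in[\rho(\widetilde\gamma_1),\rho(\widetilde\gamma_2)]\cap\mathbb Q$, then there exists a loop $\gamma$ starting at $\alpha$ with $\rho(\widetilde\gamma)=r$. (ii) Let $\alpha$ be a vertex of ${\cal G}$ and, for every $n\ge0$, let $\gamma_n$ be a loop in ${\cal G}$ starting at $\alpha$. If $\lim_{n\to\infty}\rho(\widetilde\gamma_n)=s\in\mathbb R$, then there exists an infinite path $\bar\alpha=(\alpha_n)_{n\ge0}$ in ${\cal G}$ with $\alpha_0=\alpha$, $\alpha_n=\alpha$ for infinitely many $n$, and $\rho(\bar\alpha)=s$.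
   Context: A lifted graph is a connected topological space $T$ with a homeomorphism $h\colon\mathbb R\to h(\mathbb R)\subset T$ and a homeomorphism $\tau\colon T\to T$ such that $\tau(h(x))=h(x+1)$, the closure of each connected component of $T\setminus h(\mathbb R)$ is a topological finite graph meeting $h(\mathbb R)$ in exactly one point, and only finitely many such components have closure meeting $h([0,1])$. Identify $h(\mathbb R)$ with $\mathbb R$, write $x+m:=\tau^m(x)$; $r_{\mathbb R}\colon T\to\mathbb R$ is the identity on $\mathbb R$ and maps a component $C$ of $T\setminus\mathbb R$ to the point $\overline C\cap\mathbb R$. $F$ has degree 1 if $F(x+1)=F(x)+1$. Let $T_{\mathbb R}:=\overline{\bigcup_{n\ge0}F^n(\mathbb R)}$, $X:=\overline{T\setminus T_{\mathbb R}}\cap r_{\mathbb R}^{-1}([0,1))$. $F$ is sun-like if $(T\setminus T_{\mathbb R})\cap r_{\mathbb R}^{-1}([0,1))$ consists of finitely many intervals with pairwise disjoint closures $X^i$, $i\in\Lambda$ (branches), each a compact interval meeting $T_{\mathbb R}$ in one endpoint $\min X^i$ (fixing the order of $X^i$). A basic partition is a finite family ${\cal P}=\{X^i_j\}$ of pairwise disjoint nonempty compact intervals $X^i_1<\dots<X^i_{N_i}$ in $X^i$, with $\ell(X^i_j)\in\Lambda$, $p(X^i_j)\in\mathbb Z$, such that $F(X^i_j)\subset(X^{\ell(X^i_j)}+p(X^i_j))\cup\mathrm{Int}(T_{\mathbb R})$, $F(\min X^i_j)=\min X^{\ell(X^i_j)}+p(X^i_j)$, and $F(X\setminus\bigcup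 X^i_j)\cap(X+\mathbb Z)=\emptyset$. For $A_0,\dots,A_n\in{\cal P}$, $\langle A_0\dots A_n\rangle:=F^n(\{x\in T: F^i(x)\in A_i+\mathbb Z,\ 0\le i\le n\})\cap X$. $A_0\dots A_n\sim B_0\dots B_m$ iff for some $k\le\min(n,m)$, $A_{n-i}=B_{m-i}$ ($0\le i\le k$) and $\langle A_0\dots A_{n-k}\rangle=A_{n-k}=B_{m-k}=\langle B_0\dots B_{m-k}\rangle$. The covering graph ${\cal G}$: vertices are classes $A_0\dots A_n/\!\sim$ with $\langle A_0\dots A_n\rangle\ne\emptyset$; arrow $\alpha\to\beta$ iff $\alpha=A_0\dots A_n/\!\sim$, $\beta=A_0\dots A_nA_{n+1}/\!\sim$ for some $A_i\in{\cal P}$. The weight of an arrow $\alpha\to\beta$ is $W(\alpha\beta):=p(A)$ with $A\in{\cal P}$ the unique element containing $\langle\alpha\rangle$. A finite path $\alpha_0\dots\alpha_n$ ($\alpha_i\to\alpha_{i+1}$) has length $n$ and weight $W(\alpha_0\dots\alpha_n):=\sum_{i<n}W(\alpha_i\alpha_{i+1})$; a loop starting at $\alpha$ is a finite path of positive length with $\alpha_0=\alpha_n=\alpha$; $\widetilde\gamma$ denotes the infinite path obtained by concatenating the loop $\gamma$ with itself infinitely many times. For an infinite path $\bar\alpha=(\alpha_n)_{n\ge0}$, $\rho(\bar\alpha):=\lim_{n\to\infty}W(\alpha_0\dots\alpha_n)/n$ when the limit exists. *)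

(* The real line is an arbitrary realType R
   (every realType is isomorphic to the reals). *)
From HB Require Import structures.
From mathcomp Require Import all_boot all_order all_algebra.
From mathcomp Require Import all_classical all_reals all_analysis.
Set Implicit Arguments. Unset Strict Implicit. Unset Printing Implicit Defensive.
Import Order.TTheory GRing.Theory Num.Theory.
Import numFieldTopology.Exports numFieldNormedType.Exports.
Local Open Scope classical_set_scope.
Local Open Scope ring_scope.

Section LiftedGraphs.
Variables (R : realType) (T : topologicalType).

Definition I01 : set R := [set t | 0 <= t <= 1].
Definition I01l : set R := [set t | 0 < t <= 1].

Definition embedding_on (D : set R) (f : R -> T) : Prop :=
  [/\ (forall x y, D x -> D y -> f x = f y -> x = y),
      {within D, continuous f} &
      (forall U : set R, open U ->
         exists V : set T, open V /\ f @` (U `&` D) = V `&` f @` D)].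

Definition topological_finite_graph (G : set T) : Prop :=
  exists (V : seq T) (m : nat) (E : 'I_m -> R -> T),
    [/\ (forall e, embedding_on I01 (E e)),
        (forall e, (E e 0) \in V /\ (E e 1) \in V),
        (forall e t, 0 < t < 1 -> E e t \notin V),
        (forall i j, i <> j -> forall s t, 0 < s < 1 -> 0 < t < 1 ->
             E i s <> E j t) &
        G = [set x | x \in V] `|` \bigcup_(e in [set: 'I_m]) (E e @` I01)].

Definition homeomorphism (tau : T -> T) : Prop :=
  [/\ bijective tau, continuous tau & (forall U : set T, open U -> open (tau @` U))].

Definition comp (h : R -> T) (x : T) : set T :=
  connected_component (~` range h) x.

Definition lifted_graph (h : R -> T) (tau : T -> T) : Prop :=
  connected [set: T] /\
  [/\ embedding_on setT h,
      homeomorphism tau,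
      (forall x, tau (h x) = h (x + 1)),
      (forall x, ~ range h x ->
          topological_finite_graph (closure (comp h x)) /\
          exists y, closure (comp h x) `&` range h = [set h y]) &
      finite_set [set C : set T | exists x, ~ range h x /\ C = comp h x /\
                     closure C `&` (h @` I01) !=set0] ].

(* r_R t = x *)
Definition rR (h : R -> T) (x : R) (t : T) : Prop :=
  t = h x \/ (~ range h t /\ closure (comp h t) (h x)).

(* y = x + m, i.e. y = tau^m x, for m : int *)
Definition zshift (tau : T -> T) (m : int) (x y : T) : Prop :=
  (exists n : nat, m = n%:Z /\ y = iter n tau x) \/
  (exists n : nat, m = - n%:Z /\ x = iter n tau y).

Definition shiftset (tau : T -> T) (A : set T) (m : int) : set T :=
  [set y | exists2 x, A x & zshift tau m x y].

Definition Zorbit (tau : T -> T) (A : set T) : set T :=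
  \bigcup_(m in [set: int]) shiftset tau A m.

Definition degree_one (tau F : T -> T) : Prop := forall x, F (tau x) = tau (F x).

Definition TR (h : R -> T) (F : T -> T) : set T :=
  closure (\bigcup_(n in [set: nat]) (iter n F @` range h)).

Definition rpre01 (h : R -> T) : set T :=
  [set t | exists x, 0 <= x < 1 /\ rR h x t].

Definition Xset (h : R -> T) (F : T -> T) : set T :=
  closure (~` TR h F) `&` rpre01 h.

(* F is sun-like, with branches X^i = xi i ([0,1]), i in L, min X^i = xi i 0
   (the order on X^i is the one transported by xi i) *)
Definition sun_like (h : R -> T) (F : T -> T) (L : finType) (xi : L -> R -> T)
  : Prop :=
  (forall i, embedding_on I01 (xi i)) /\
  [/\ (forall i, TR h F (xi i 0)),
      (forall i t, 0 < t <= 1 -> ~ TR h F (xi i t)),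
      (forall i, closure (xi i @` I01l) = xi i @` I01),
      (forall i j, i <> j -> (xi i @` I01) `&` (xi j @` I01) = set0) &
      (~` TR h F) `&` rpre01 h = \bigcup_(i in [set: L]) (xi i @` I01l)].

Definition Aset (L P : finType) (xi : L -> R -> T) (br : P -> L) (a b : P -> R)
  (j : P) : set T := xi (br j) @` [set t | a j <= t <= b j].

Definition basic_partition (h : R -> T) (tau F : T -> T) (L : finType)
  (xi : L -> R -> T) (P : finType) (br : P -> L) (a b : P -> R)
  (lab : P -> L) (pp : P -> int) : Prop :=
  [/\ (forall j, 0 <= a j <= b j /\ b j <= 1),
      (forall j k, j <> k -> Aset xi br a b j `&` Aset xi br a b k = set0),
      (forall j, F @` Aset xi br a b j `<=`
          shiftset tau (xi (lab j) @` I01) (pp j) `|` interior (TR h F)),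
      (forall j, zshift tau (pp j) (xi (lab j) 0) (F (xi (br j) (a j)))) &
      (F @` (Xset h F `\` \bigcup_(j in [set: P]) Aset xi br a b j))
         `&` Zorbit tau (Xset h F) = set0].

(* < A_0 ... A_n > for s = [:: A_0; ...; A_n] *)
Definition cyl (h : R -> T) (tau F : T -> T) (L P : finType) (xi : L -> R -> T)
  (br : P -> L) (a b : P -> R) (s : seq P) : set T :=
  [set y | Xset h F y /\ exists x, y = iter (size s).-1 F x /\
     forall (j0 : P) (i : nat), (i < size s)%N ->
        Zorbit tau (Aset xi br a b (nth j0 s i)) (iter i F x)].

(* A_0...A_n ~ B_0...B_m : the last k+1 symbols agree (A::u) and
   <A_0..A_{n-k}> = A_{n-k} = B_{m-k} = <B_0..B_{m-k}> *)
Definition sim (h : R -> T) (tau F : T -> T) (L P : finType) (xi : L -> R -> T)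
  (br : P -> L) (a b : P -> R) (s t : seq P) : Prop :=
  exists (A : P) (u s' t' : seq P),
    [/\ s = s' ++ A :: u, t = t' ++ A :: u,
        cyl h tau F xi br a b (rcons s' A) = Aset xi br a b A &
        cyl h tau F xi br a b (rcons t' A) = Aset xi br a b A].

(* vertices of the covering graph are ~-classes, represented as sets of words *)
Definition cls (h : R -> T) (tau F : T -> T) (L P : finType) (xi : L -> R -> T)
  (br : P -> L) (a b : P -> R) (s : seq P) : set (seq P) :=
  [set t | sim h tau F xi br a b s t].

Definition vertex (h : R -> T) (tau F : T -> T) (L P : finType) (xi : L -> R -> T)
  (br : P -> L) (a b : P -> R) (al : set (seq P)) : Prop :=
  exists s, s <> [::] /\ cyl h tau F xi br a b s !=set0 /\ al = cls h tau F xi br a b s.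

Definition arrow (h : R -> T) (tau F : T -> T) (L P : finType) (xi : L -> R -> T)
  (br : P -> L) (a b : P -> R) (pp : P -> int) (al be : set (seq P)) (w : int)
  : Prop :=
  [/\ vertex h tau F xi br a b al, vertex h tau F xi br a b be &
      exists (s' : seq P) (B A : P),
        al = cls h tau F xi br a b (rcons s' B) /\
        be = cls h tau F xi br a b (rcons (rcons s' B) A) /\ w = pp B].

Definition has_rho (h : R -> T) (tau F : T -> T) (L P : finType) (xi : L -> R -> T)
  (br : P -> L) (a b : P -> R) (pp : P -> int) (path : nat -> set (seq P)) (r : R)
  : Prop :=
  exists w : nat -> int,
    (forall n, arrow h tau F xi br a b pp (path n) (path n.+1) (w n)) /\
    ((fun n : nat => (\sum_(i < n) w i)%:~R / n%:R) @ \oo --> r).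

Definition loop_at (h : R -> T) (tau F : T -> T) (L P : finType) (xi : L -> R -> T)
  (br : P -> L) (a b : P -> R) (pp : P -> int) (al : set (seq P))
  (n : nat) (g : nat -> set (seq P)) : Prop :=
  [/\ (0 < n)%N, g 0%N = al, g n = al &
      forall i, (i < n)%N -> exists w, arrow h tau F xi br a b pp (g i) (g i.+1) w].

Definition loop_rep (n : nat) (X : Type) (g : nat -> X) : nat -> X :=
  fun k => g (k %% n)%N.

End LiftedGraphs.

From HB Require Import structures.
From mathcomp Require Import all_boot all_order all_algebra.
From mathcomp Require Import all_classical all_reals all_analysis.
From mathcomp Require Import zify ring lra.
Set Implicit Arguments. Unset Strict Implicit. Unset Printing Implicit Defensive.
Import Order.TTheory GRing.Theory Num.Theory.
Import numFieldTopology.Exports numFieldNormedType.Exports.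
Local Open Scope classical_set_scope.
Local Open Scope ring_scope.

(* For (i), choose the least admissible weight on every arrow of
   gamma_1 and the largest on every arrow of gamma_2; the resulting periodic
   weight sequences have means m1/n1 <= r <= M2/n2.  Writing r = u/v, going
   p times around gamma_1 and then q times around gamma_2 with
   p (u n1 - v m1) = q (v M2 - u n2) gives a loop of mean weight exactly r.
   For (ii), concatenate blocks, the k-th one going a whole number of times
   around gamma_k, each block much longer than everything before it and than
   the time the running means of gamma_k need to come within 1/(k+1) of its
   rotation number.  The running mean of the concatenation at any time is then
   controlled by the last two blocks, whose rotation numbers tend to s. *)

Lemma sum_periodic (V : nmodType) (u : nat -> V) N :
  (forall k, u (k + N)%N = u k) ->
  forall q r, \sum_(i < q * N + r) u i = (\sum_(i < N) u i) *+ q + \sum_(i < r) u i.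
Proof.
move=> uN; elim=> [|q IHq] r; first by rewrite mul0n add0n mulr0n add0r.
rewrite mulSn -addnA big_split_ord /=.
under [X in _ + X]eq_bigr do rewrite addnC uN.
by rewrite IHq mulrS addrA.
Qed.

Lemma sum_mod (V : nmodType) (u : nat -> V) n q : (0 < n)%N ->
  \sum_(i < q * n) u (i %% n)%N = (\sum_(i < n) u i) *+ q.
Proof.
move=> n_gt0; have := @sum_periodic V (fun i => u (i %% n)%N) n _ q 0.
rewrite addn0 big_ord0 addr0 => -> //; last by move=> k; rewrite modnDr.
by congr (_ *+ _); apply: eq_bigr => i _; rewrite modn_small.
Qed.

Lemma exists_min_int (Q : int -> Prop) (lb : int) :
  (exists w, Q w) -> (forall w, Q w -> lb <= w) ->
  exists2 m, Q m & forall w, Q w -> m <= w.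
Proof.
move=> [w0 Qw0] lbQ.
have offset_ex : exists n : nat, `[< Q (lb + n%:Z) >].
  exists `|w0 - lb|%N; apply/asboolP.
  by rewrite gez0_abs ?subr_ge0 ?lbQ // addrCA subrr addr0.
case: (ex_minnP offset_ex) => m /asboolP Qm m_min.
exists (lb + m%:Z) => // w Qw.
have := m_min `|w - lb|%N.
rewrite gez0_abs ?subr_ge0 ?lbQ // addrCA subrr addr0 => /(_ (asboolT Qw)).
by rewrite -lez_nat gez0_abs ?subr_ge0 ?lbQ // lerBrDl.
Qed.

Lemma ler_frac_int (R : realFieldType) (a b c d : int) : 0 < b -> 0 < d ->
  (a%:~R / b%:~R <= c%:~R / d%:~R :> R) = (a * d <= c * b).
Proof.
move=> b_gt0 d_gt0; rewrite ler_pdivrMr ?ltr0z // mulrAC ler_pdivlMr ?ltr0z //.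
by rewrite -!intrM ler_int.
Qed.

Lemma mediant_combination (m1 M2 u v : int) (n1 n2 : nat) :
  (0 < n1)%N -> (0 < n2)%N -> m1 * v <= u * n1%:Z -> u * n2%:Z <= M2 * v ->
  exists p q : nat, (0 < p * n1 + q * n2)%N /\
    (m1 *+ p + M2 *+ q) * v = u * (p * n1 + q * n2)%N%:Z.
Proof.
move=> n1_gt0 n2_gt0; rewrite -subr_ge0 => a_ge0; rewrite -subr_ge0 => b_ge0.
have [a0|a_neq0] := eqVneq (u * n1%:Z - m1 * v) 0.
  exists 1%N, 0%N; rewrite mul1n mul0n addn0 n1_gt0; split=> //.
  by move/eqP: a0; rewrite subr_eq0 => /eqP a0; rewrite mulr1n mulr0n addr0 a0.
exists (absz (M2 * v - u * n2%:Z)%R), (absz (u * n1%:Z - m1 * v)%R); split.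
  by rewrite addn_gt0 !muln_gt0 !absz_gt0 a_neq0 n2_gt0 orbT.
by rewrite PoszD !PoszM !pmulrn !mulrzz !gez0_abs //; ring.
Qed.

Section Means.
Context {R : realType}.

Definition mean (u : nat -> R) (n : nat) : R := (\sum_(i < n) u i) / n%:R.

Lemma mean_intr (w : nat -> int) :
  (fun n : nat => (\sum_(i < n) w i)%:~R / n%:R) = mean (fun i => (w i)%:~R).
Proof. by apply/funext => n; rewrite /mean rmorph_sum. Qed.

Lemma cvg_dist_bounded (u b : nat -> R) l : b @ \oo --> 0 ->
  (\forall n \near \oo, `|u n - l| <= b n) -> u @ \oo --> l.
Proof.
move=> b0 ub; apply/cvgrPdist_le => e e_gt0.
near=> n; rewrite distrC.
have bn : `|b n| <= e by near: n; exact: cvgr0_norm_le.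
by apply: le_trans (le_trans (ler_norm _) bn); near: n.
Unshelve. all: by end_near. Qed.

Lemma cvg_const_div_nat (K : R) : (fun n : nat => K / n%:R) @ \oo --> 0.
Proof.
have Kh : (fun n : nat => K * harmonic n) @ \oo --> 0.
  by rewrite -(mulr0 K); apply: cvgM cvg_harmonic; exact: cvg_cst.
rewrite -(cvg_shiftn 1) /=; apply: cvg_trans Kh.
by apply: near_eq_cvg; apply: nearW => n; rewrite addn1.
Qed.

Lemma mean_periodic_cvg (u : nat -> R) N : (0 < N)%N ->
  (forall k, u (k + N)%N = u k) -> mean u @ \oo --> mean u N.
Proof.
move=> N_gt0 uN; pose v k := u k - mean u N.
have vN k : v (k + N)%N = v k by rewrite /v uN.
have v_period0 : \sum_(i < N) v i = 0.
  by rewrite sumrB sumr_const card_ord -mulr_natr divfK ?subrr // pnatr_eq0 -lt0n.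
(* Partial sums of v are periodic, hence bounded. *)
have v_bounded n : `|\sum_(i < n) v i| <= \sum_(i < N) `|v i|.
  rewrite (divn_eq n N) sum_periodic // v_period0 mul0rn add0r.
  move: (n %% N)%N (ltnW (ltn_pmod n N_gt0)) => r r_le.
  apply: le_trans (ler_norm_sum _ _ _) _.
  rewrite -(subnKC r_le) big_split_ord /= lerDl.
  exact: sumr_ge0.
apply: (cvg_dist_bounded (cvg_const_div_nat (\sum_(i < N) `|v i|))).
near=> n; have n_gt0 : (0 < n)%N by near: n; exact: nbhs_infty_gt.
have -> : mean u n - mean u N = (\sum_(i < n) v i) / n%:R.
  rewrite sumrB sumr_const card_ord -[mean u N *+ n]mulr_natr /mean.
  by field; rewrite !pnatr_eq0 -!lt0n n_gt0.
by rewrite normrM normfV normr_nat ler_pM2r ?invr_gt0 ?ltr0n.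
Unshelve. all: by end_near. Qed.

Lemma mean_mod_cvg n (c : nat -> int) : (0 < n)%N ->
  (fun m : nat => (\sum_(i < m) c (i %% n)%N)%:~R / m%:R) @ \oo
    --> ((\sum_(i < n) c i)%:~R / n%:R : R).
Proof.
move=> n_gt0; rewrite (mean_intr (fun i => c (i %% n)%N)).
have -> : (\sum_(i < n) c i)%:~R / n%:R = mean (fun i => (c (i %% n)%N)%:~R) n.
  by rewrite /mean rmorph_sum; congr (_ / _); apply: eq_bigr => i _; rewrite modn_small.
by apply: mean_periodic_cvg => // k; rewrite modnDr.
Qed.

Lemma mean_centered_cvg (u : nat -> R) s :
  mean (fun i => u i - s) @ \oo --> 0 -> mean u @ \oo --> s.
Proof.
move=> centered.
have shifted : (fun n => mean (fun i => u i - s) n + s) @ \oo --> s.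
  by rewrite -[s in _ --> s]add0r; apply: cvgD centered (cvg_cst s).
apply: cvg_trans _ shifted; apply: near_eq_cvg; near=> n.
have n_gt0 : (0 < n)%N by near: n; exact: nbhs_infty_gt.
rewrite /mean sumrB sumr_const card_ord -[s *+ n]mulr_natr.
by field; rewrite pnatr_eq0 -lt0n.
Unshelve. all: by end_near. Qed.

Lemma le_natmul_bound (z : R) (m : nat) : 0 <= z -> (0 < m)%N ->
  z <= (m * (Num.bound z).+1)%:R.
Proof.
move=> z_ge0 m_gt0; apply: le_trans (ltW (archi_boundP z_ge0)) _.
by rewrite ler_nat (leq_trans (leqnSn _)) // leq_pmull.
Qed.

Lemma sum_sub_mean_le (w : nat -> R) (C rho s delta : R) (J : nat) :
  (forall i, `|w i - s| <= C) ->
  (forall j, (J <= j)%N -> `|rho - mean w j| <= delta) ->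
  forall j, `|\sum_(i < j) (w i - s)| <= j%:R * (`|rho - s| + delta) + J%:R * C.
Proof.
move=> w_dev w_mean j.
have C_ge0 : 0 <= C := le_trans (normr_ge0 _) (w_dev 0%N).
have delta_ge0 : 0 <= delta := le_trans (normr_ge0 _) (w_mean J (leqnn J)).
have sum_le k : `|\sum_(i < k) (w i - s)| <= k%:R * C.
  apply: le_trans (ler_norm_sum _ _ _) (le_trans (ler_sum _ _) _) => [i _|].
    exact: w_dev.
  by rewrite sumr_const card_ord mulr_natl.
have [jJ|Jj] := ltnP j J.
  apply: le_trans (sum_le j) _.
  rewrite -[X in X <= _]add0r lerD ?mulr_ge0 ?addr_ge0 //.
  by apply: ler_wpM2r; rewrite // ler_nat ltnW.
case: (posnP j) => [->|j_gt0].
  by rewrite big_ord0 normr0 mul0r add0r mulr_ge0.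
have -> : \sum_(i < j) (w i - s) = j%:R * ((rho - s) - (rho - mean w j)).
  rewrite /mean sumrB sumr_const card_ord -mulr_natl.
  by field; rewrite pnatr_eq0 -lt0n.
rewrite normrM normr_nat -[X in X <= _]addr0 lerD ?mulr_ge0 //.
apply: ler_wpM2l => //; apply: le_trans (ler_normB _ _) _.
by rewrite lerD2l w_mean.
Qed.

End Means.

Section BlockDecomposition.
Variable T : nat -> nat.
Hypotheses (T0 : T 0%N = 0%N) (T_lt : forall k, (T k < T k.+1)%N).

Lemma block_start_le : {homo T : i j / (i <= j)%N}.
Proof. by apply: homo_leq => // [y x z|k]; [exact: leq_trans | exact: ltnW]. Qed.

Lemma block_start_ge k : (k <= T k)%N.
Proof. by elim: k => // k IHk; apply: leq_ltn_trans IHk (T_lt k). Qed.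

Lemma block_exists n : exists k, (T k <= n < T k.+1)%N.
Proof.
elim: n => [|n [k /andP[lo hi]]]; first by exists 0%N; have := T_lt 0; rewrite T0 => ->.
have [n_lt|n_ge] := ltnP n.+1 (T k.+1).
  by exists k; rewrite n_lt (leq_trans lo).
exists k.+1; have Tk1 : T k.+1 = n.+1 by apply/eqP; rewrite eqn_leq n_ge hi.
by rewrite Tk1 leqnn -Tk1 T_lt.
Qed.

Lemma block_unique k k' n :
  (T k <= n < T k.+1)%N -> (T k' <= n < T k'.+1)%N -> k = k'.
Proof.
move=> /andP[lo hi] /andP[lo' hi']; apply/eqP; rewrite eqn_leq.
apply/andP; split; rewrite leqNgt; apply/negP => /block_start_le Tle.
  by move: (leq_trans Tle lo); rewrite leqNgt hi'.
by move: (leq_trans Tle lo'); rewrite leqNgt hi.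
Qed.

End BlockDecomposition.

Section BlockMeans.
Variables (R : realType) (x : nat -> R) (T : nat -> nat) (C : R) (eta M : nat -> R).
Hypotheses (T0 : T 0%N = 0%N) (T_lt : forall k, (T k < T k.+1)%N).
Hypothesis x_le : forall i, `|x i| <= C.
Hypotheses (eta_ge0 : forall k, 0 <= eta k) (eta_cvg0 : eta @ \oo --> 0).
Hypothesis block_sum_le : forall k j, (j <= T k.+1 - T k)%N ->
  `|\sum_(i < j) x (T k + i)%N| <= j%:R * eta k + M k.
Hypothesis block_long : forall k,
  k.+1%:R * (C * (T k)%:R + M k + M k.+1) <= (T k.+1 - T k)%:R.

Let D n := \sum_(i < n) x i.

Lemma prefix_sum_le n : `|D n| <= n%:R * C.
Proof.
apply: le_trans (ler_norm_sum _ _ _) (le_trans (ler_sum _ _) _) => [i _|].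
  exact: x_le.
by rewrite sumr_const card_ord mulr_natl.
Qed.

Lemma prefix_sum_two_blocks k j : (j <= T k.+2 - T k.+1)%N ->
  `|D (T k.+1 + j)| <= (T k.+1 + j)%:R * (k.+1%:R^-1 + eta k + eta k.+1).
Proof.
move=> j_le; set l := (T k.+1 - T k)%N.
have Tk1 : T k.+1 = (T k + l)%N by rewrite subnKC // ltnW.
have -> : D (T k.+1 + j) =
    D (T k) + \sum_(i < l) x (T k + i)%N + \sum_(i < j) x (T k.+1 + i)%N.
  have D_split m i : D (m + i) = D m + \sum_(i0 < i) x (m + i0)%N.
    by rewrite /D big_split_ord.
  by rewrite D_split; congr (_ + _); rewrite Tk1 D_split.
have l_le : (l%:R : R) <= (T k.+1 + j)%:R by rewrite ler_nat; lia.
have j_le' : (j%:R : R) <= (T k.+1 + j)%:R by rewrite ler_nat leq_addl.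
have head_le : C * (T k)%:R + M k + M k.+1 <= (T k.+1 + j)%:R / k.+1%:R.
  by rewrite ler_pdivlMr ?ltr0n // mulrC (le_trans (block_long k)).
(* The head D (T k) and both transients cost at most N / (k + 1) by block_long,
   the two block sums at most N (eta k + eta k.+1). *)
have := ler_normD (D (T k) + \sum_(i < l) x (T k + i)%N) (\sum_(i < j) x (T k.+1 + i)%N).
have := ler_normD (D (T k)) (\sum_(i < l) x (T k + i)%N).
have := prefix_sum_le (T k); have := block_sum_le (leqnn l); have := block_sum_le j_le.
have := ler_wpM2r (eta_ge0 k) l_le; have := ler_wpM2r (eta_ge0 k.+1) j_le'.
rewrite !mulrDr; set N := (T k.+1 + j)%:R in head_le *; set iK := k.+1%:R^-1 in head_le *.
move=> *; lra.
Qed.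

Lemma block_mean_cvg0 : mean x @ \oo --> 0.
Proof.
pose beta k := k.+1%:R^-1 + eta k + eta k.+1.
have beta_cvg0 : beta @ \oo --> 0.
  have etaS_cvg0 : (fun k => eta k.+1) @ \oo --> 0 by rewrite cvg_shiftS.
  by have := cvgD (cvgD cvg_harmonic eta_cvg0) etaS_cvg0; rewrite !addr0; exact.
apply/cvgrPdist_le => e e_gt0.
have [K _ betaK] : \forall k \near \oo, `|beta k| <= e.
  exact: cvgr0_norm_le.
exists (T K.+1) => // n /= n_ge.
have [[|k] /andP[lo hi]] := block_exists T0 T_lt n.
  by move: (leq_trans (block_start_le T_lt (ltn0Sn K)) n_ge); rewrite leqNgt hi.
have Kk : (K <= k)%N.
  rewrite leqNgt; apply/negP => kK.
  have TK : (T k.+2 <= T K.+1)%N := block_start_le T_lt (kK : (k.+2 <= K.+1)%N).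
  by move: (leq_trans TK n_ge); rewrite leqNgt hi.
have n_gt0 : (0 < n)%N := leq_trans (leq_ltn_trans (leq0n _) (T_lt k)) lo.
have := @prefix_sum_two_blocks k (n - T k.+1); rewrite subnKC // => Dn.
rewrite sub0r normrN /mean normrM normfV normr_nat ler_pdivrMr ?ltr0n //.
apply: le_trans (Dn _) _; first by rewrite leq_sub2r // ltnW.
rewrite [e * _]mulrC ler_pM2l ?ltr0n //.
exact: le_trans (ler_norm (beta k)) (betaK _ Kk).
Qed.

End BlockMeans.

Fixpoint block_start (len : nat -> nat -> nat) (k : nat) : nat :=
  if k is k'.+1 then (block_start len k' + len k' (block_start len k'))%N else 0%N.

Definition loop_cat (Y : Type) (p n1 n2 : nat) (f1 f2 : nat -> Y) (k : nat) : Y :=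
  if (k < p * n1)%N then f1 (k %% n1)%N else f2 ((k - p * n1) %% n2)%N.

Lemma sum_loop_cat (V : nmodType) (u1 u2 : nat -> V) p n1 q n2 :
  (0 < n1)%N -> (0 < n2)%N ->
  \sum_(i < p * n1 + q * n2) loop_cat p n1 n2 u1 u2 i
  = (\sum_(i < n1) u1 i) *+ p + (\sum_(i < n2) u2 i) *+ q.
Proof.
move=> n1_gt0 n2_gt0; rewrite big_split_ord /=.
under eq_bigr => i _ do rewrite /loop_cat /= ltn_ord.
under [X in _ + X]eq_bigr => i _ do rewrite /loop_cat /= ltnNge leq_addr /= addKn.
by rewrite !sum_mod.
Qed.

Section WeightedGraph.
Variables (R : realType) (X : Type) (E : X -> X -> int -> Prop).

Definition is_loop (al : X) (n : nat) (g : nat -> X) : Prop :=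
  [/\ (0 < n)%N, g 0%N = al, g n = al &
      forall i, (i < n)%N -> exists w, E (g i) (g i.+1) w].

Definition loop_weighted (n : nat) (g : nat -> X) (c : nat -> int) : Prop :=
  forall i, (i < n)%N -> E (g i) (g i.+1) (c i).

Definition has_mean_weight (path : nat -> X) (r : R) : Prop :=
  exists w : nat -> int, (forall n, E (path n) (path n.+1) (w n)) /\
    (fun n : nat => (\sum_(i < n) w i)%:~R / n%:R) @ \oo --> r.

Lemma loop_repS al n g k : is_loop al n g -> loop_rep n g k.+1 = g (k %% n).+1.
Proof.
case=> n_gt0 g0 gn _; rewrite /loop_rep -addn1 -modnDml addn1.
have := ltn_pmod k n_gt0; rewrite leq_eqVlt => /orP[/eqP->|lt_n].
  by rewrite modnn g0 gn.
by rewrite modn_small.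
Qed.

Lemma loop_rep_weighted al n g c : is_loop al n g -> loop_weighted n g c ->
  forall k, E (loop_rep n g k) (loop_rep n g k.+1) (c (k %% n)%N).
Proof.
move=> gl gc k; have [n_gt0 _ _ _] := gl.
by rewrite (loop_repS _ gl); apply: gc; rewrite ltn_pmod.
Qed.

Lemma loop_rep_mean_weight al n g c : is_loop al n g -> loop_weighted n g c ->
  has_mean_weight (loop_rep n g) ((\sum_(i < n) c i)%:~R / n%:R).
Proof.
move=> gl gc; have [n_gt0 _ _ _] := gl.
exists (fun k => c (k %% n)%N); split; first exact: loop_rep_weighted gl gc.
exact: mean_mod_cvg.
Qed.

Lemma loop_cat_loop al n1 n2 g1 g2 c1 c2 p q :
  is_loop al n1 g1 -> is_loop al n2 g2 ->
  loop_weighted n1 g1 c1 -> loop_weighted n2 g2 c2 -> (0 < p * n1 + q * n2)%N ->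
  is_loop al (p * n1 + q * n2) (loop_cat p n1 n2 g1 g2) /\
  loop_weighted (p * n1 + q * n2) (loop_cat p n1 n2 g1 g2) (loop_cat p n1 n2 c1 c2).
Proof.
move=> gl1 gl2 gc1 gc2 N_gt0.
have [n1_gt0 g10 _ _] := gl1; have [_ g20 _ _] := gl2.
have gc : loop_weighted (p * n1 + q * n2) (loop_cat p n1 n2 g1 g2)
                        (loop_cat p n1 n2 c1 c2).
  move=> i i_lt; rewrite /loop_cat.
  have [i_lt1|i_ge1] := ltnP i (p * n1).
    have -> : (if (i.+1 < p * n1)%N then g1 (i.+1 %% n1)%N
               else g2 ((i.+1 - p * n1) %% n2)%N) = g1 (i %% n1).+1.
      rewrite -(loop_repS _ gl1) /loop_rep.
      case: (ltnP i.+1 (p * n1)) => // i1_ge.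
      have -> : i.+1 = (p * n1)%N by apply/eqP; rewrite eqn_leq i_lt1 i1_ge.
      by rewrite subnn mod0n g20 modnMl g10.
    by apply: gc1; rewrite ltn_pmod.
  rewrite ltnNge (leq_trans i_ge1 (leqnSn i)) /= subSn //.
  exact: loop_rep_weighted gl2 gc2 _.
split=> //; split=> //.
- by rewrite /loop_cat; case: ifP; rewrite ?sub0n mod0n.
- by rewrite /loop_cat ltnNge leq_addr /= addKn modnMl.
- by move=> i /gc; exists (loop_cat p n1 n2 c1 c2 i).
Qed.

Lemma concat_loops al (ns : nat -> nat) (gs : nat -> nat -> X) (ws : nat -> nat -> int)
    (T : nat -> nat) :
  (forall k, is_loop al (ns k) (gs k)) ->
  (forall k j, E (loop_rep (ns k) (gs k) j) (loop_rep (ns k) (gs k) j.+1) (ws k j)) ->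
  T 0%N = 0%N -> (forall k, (T k < T k.+1)%N) -> (forall k, (ns k %| T k.+1 - T k)%N) ->
  exists (path : nat -> X) (w : nat -> int),
    [/\ forall k, path (T k) = al,
        forall n, E (path n) (path n.+1) (w n) &
        forall k j, (j < T k.+1 - T k)%N -> w (T k + j)%N = ws k j].
Proof.
move=> loops arrows T0 T_lt ns_dvd.
have /choice[bk bkP] := block_exists T0 T_lt.
have bk_block k j : (j < T k.+1 - T k)%N -> bk (T k + j)%N = k.
  by move=> j_lt; apply: (block_unique T_lt (bkP _)); rewrite leq_addr -ltn_subRL.
pose path n := loop_rep (ns (bk n)) (gs (bk n)) (n - T (bk n))%N.
pose w n := ws (bk n) (n - T (bk n))%N.
have path_block k j : (j <= T k.+1 - T k)%N -> path (T k + j)%N = loop_rep (ns k) (gs k) j.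
  rewrite leq_eqVlt => /orP[/eqP->|j_lt]; last by rewrite /path bk_block // addKn.
  rewrite subnKC ?(ltnW (T_lt k)) // -[T k.+1]addn0 /path bk_block ?subn_gt0 // addKn /loop_rep.
  have [_ g0 _ _] := loops k.+1; have [_ g0' _ _] := loops k.
  rewrite addn0 mod0n; have := ns_dvd k; rewrite /dvdn => /eqP->.
  by rewrite g0 g0'.
exists path, w; split.
- move=> k; rewrite -[T k]addn0 path_block // /loop_rep mod0n.
  by have [_ ->] := loops k.
- move=> n; have /andP[lo hi] := bkP n.
  have j_lt : (n - T (bk n) < T (bk n).+1 - T (bk n))%N by rewrite ltn_sub2r.
  have n_eq : n = (T (bk n) + (n - T (bk n)))%N by rewrite subnKC.
  rewrite [in path n]n_eq [in path n.+1]n_eq -addnS !path_block //.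
  exact: ltnW.
- by move=> k j j_lt; rewrite /w bk_block // addKn.
Qed.

Section BoundedWeights.
Variable Bd : int.
Hypothesis weight_le : forall x y w, E x y w -> `|w| <= Bd.

Lemma loop_min_weights al n g : is_loop al n g ->
  exists2 c, loop_weighted n g c &
    forall i w, (i < n)%N -> E (g i) (g i.+1) w -> c i <= w.
Proof.
case=> _ _ _ arrows.
have /choice[c cP] : forall i, exists c : int, (i < n)%N ->
    E (g i) (g i.+1) c /\ forall w, E (g i) (g i.+1) w -> c <= w.
  move=> i; have [/arrows arrow_i|_] := ltnP i n; last by exists 0.
  have [|m Em m_min] := exists_min_int (lb := - Bd) arrow_i; last by exists m.
  by move=> w /weight_le; rewrite ler_norml => /andP[].
by exists c => [i /cP[]|i w /cP[_ c_min] /c_min].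
Qed.

Lemma loop_weights_mean_le al n g (r : R) : is_loop al n g ->
  has_mean_weight (loop_rep n g) r ->
  exists2 c, loop_weighted n g c & (\sum_(i < n) c i)%:~R / n%:R <= r.
Proof.
move=> gl [w [w_arrows w_mean]]; have [n_gt0 _ _ _] := gl.
have [c gc c_min] := loop_min_weights gl; exists c => //.
apply: (ler_cvg_to (@mean_mod_cvg R n c n_gt0) w_mean); apply: nearW => m.
rewrite ler_wpM2r ?invr_ge0 ?ler0n // ler_int; apply: ler_sum => i _.
apply: c_min; first by rewrite ltn_pmod.
by have := w_arrows i; rewrite (loop_repS _ gl).
Qed.

Lemma weight_dev_le (s : R) x y v : E x y v -> `|v%:~R - s| <= `|Bd|%:~R + `|s|.
Proof.
move=> /weight_le v_le; apply: le_trans (ler_normB _ _) _.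
by rewrite lerD2r -intr_norm ler_int (le_trans v_le) ?ler_norm.
Qed.

Lemma limit_mean_path al (ns : nat -> nat) (gs : nat -> nat -> X) (rhos : nat -> R) s :
  (forall k, is_loop al (ns k) (gs k)) ->
  (forall k, has_mean_weight (loop_rep (ns k) (gs k)) (rhos k)) ->
  rhos @ \oo --> s ->
  exists path : nat -> X, [/\ path 0%N = al,
    (forall N, exists2 m, (N <= m)%N & path m = al) & has_mean_weight path s].
Proof.
move=> loops /choice[ws ws_spec] rhos_s.
pose C : R := `|Bd|%:~R + `|s|.
have C_ge0 : 0 <= C by rewrite addr_ge0 ?ler0z.
pose delta k : R := k.+1%:R^-1.
have /choice[J J_spec] : forall k, exists J : nat, forall j, (J <= j)%N ->
    `|rhos k - mean (fun i => (ws k i)%:~R) j| <= delta k.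
  move=> k; have [_] := ws_spec k; rewrite mean_intr => /cvgrPdist_le.
  by case/(_ (delta k)) => [|J _ JP]; [rewrite invr_gt0 ltr0n | exists J].
pose eta k := `|rhos k - s| + delta k.
pose M k := (J k)%:R * C.
(* Block k absorbs, up to a factor k+1, all earlier blocks together with the
   transients J k, J k.+1 of the running means of the loops k and k+1. *)
pose len k t := (ns k * (Num.bound (k.+1%:R * (C * t%:R + M k + M k.+1))).+1)%N.
pose T := block_start len.
have T_len k : (T k.+1 - T k)%N = len k (T k) by rewrite /= addKn.
have T_lt k : (T k < T k.+1)%N.
  by rewrite -subn_gt0 T_len muln_gt0 andbT; have [] := loops k.
have T_dvd k : (ns k %| T k.+1 - T k)%N by rewrite T_len dvdn_mulr.
have [path [w [path_al arrows w_block]]] :=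
  concat_loops loops (fun k => (ws_spec k).1) (erefl : T 0%N = 0%N) T_lt T_dvd.
exists path; split; first exact: path_al 0%N.
  by move=> N; exists (T N); [exact: block_start_ge | exact: path_al].
exists w; split=> //; rewrite mean_intr; apply: mean_centered_cvg.
apply: (@block_mean_cvg0 _ _ T C eta M) => //.
- by move=> i; apply: weight_dev_le (arrows i).
- by move=> k; rewrite addr_ge0 ?invr_ge0.
- have dist_cvg0 : (fun k => `|rhos k - s|) @ \oo --> 0.
    by have := cvg_norm (cvgB rhos_s (cvg_cst s)); rewrite subrr normr0; exact.
  by rewrite -[0]addr0; apply: cvgD dist_cvg0 cvg_harmonic.
- move=> k j j_le.
  rewrite (eq_bigr (fun i : 'I_j => (ws k i)%:~R - s)); last first.
    by move=> i _; rewrite w_block // (leq_trans _ j_le).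
  have ws_dev i : `|(ws k i)%:~R - s| <= C by apply: weight_dev_le ((ws_spec k).1 i).
  exact: (sum_sub_mean_le ws_dev (J_spec k)).
- move=> k; rewrite T_len; apply: le_natmul_bound; last by have [] := loops k.
  by rewrite mulr_ge0 ?addr_ge0 ?mulr_ge0.
Qed.

End BoundedWeights.

End WeightedGraph.

Lemma loop_weights_mean_ge (R : realType) (X : Type) (E : X -> X -> int -> Prop)
    (Bd : int) al n g (r : R) :
  (forall x y w, E x y w -> `|w| <= Bd) -> is_loop E al n g ->
  has_mean_weight E (loop_rep n g) r ->
  exists2 c, loop_weighted E n g c & r <= (\sum_(i < n) c i)%:~R / n%:R.
Proof.
move=> weight_le [n_gt0 g0 gn arrows] [w [w_arrows w_mean]].
pose Eopp x y v := E x y (- v).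
have Eopp_le x y v : Eopp x y v -> `|v| <= Bd.
  by move=> /weight_le; rewrite normrN.
have [||c gc c_le] := loop_weights_mean_le Eopp_le (al := al) (n := n) (g := g) (r := - r).
- by split=> // i /arrows[v Ev]; exists (- v); rewrite /Eopp opprK.
- exists (fun k => - w k); split=> [k|]; first by rewrite /Eopp opprK.
  under eq_fun do rewrite sumrN rmorphN mulNr.
  exact: cvgN.
exists (fun i => - c i) => [i /gc|]; first by [].
by rewrite sumrN rmorphN mulNr lerNr.
Qed.

Lemma rational_mean_loop (R : realType) (X : Type) (E : X -> X -> int -> Prop)
    (Bd : int) al n1 n2 g1 g2 (r1 r2 : R) (r : rat) :
  (forall x y w, E x y w -> `|w| <= Bd) ->
  is_loop E al n1 g1 -> is_loop E al n2 g2 ->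
  has_mean_weight E (loop_rep n1 g1) r1 -> has_mean_weight E (loop_rep n2 g2) r2 ->
  r1 <= ratr r <= r2 ->
  exists n g, is_loop E al n g /\ has_mean_weight E (loop_rep n g) (ratr r : R).
Proof.
move=> weight_le gl1 gl2 mw1 mw2 /andP[r1_le r2_ge].
have [n1_gt0 _ _ _] := gl1; have [n2_gt0 _ _ _] := gl2.
have [c1 gc1 c1_le] := loop_weights_mean_le weight_le gl1 mw1.
have [c2 gc2 c2_ge] := loop_weights_mean_ge weight_le gl2 mw2.
have lo : (\sum_(i < n1) c1 i) * denq r <= numq r * n1%:Z.
  rewrite -(ler_frac_int R) ?ltz_nat ?denq_gt0 // -!pmulrn.
  exact: le_trans c1_le r1_le.
have hi : numq r * n2%:Z <= (\sum_(i < n2) c2 i) * denq r.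
  rewrite -(ler_frac_int R) ?ltz_nat ?denq_gt0 // -!pmulrn.
  exact: le_trans r2_ge c2_ge.
have [p [q [N_gt0 pq_mean]]] := mediant_combination n1_gt0 n2_gt0 lo hi.
have [gl gc] := loop_cat_loop gl1 gl2 gc1 gc2 N_gt0.
exists (p * n1 + q * n2)%N, (loop_cat p n1 n2 g1 g2); split=> //.
suff -> : ratr r = (\sum_(i < p * n1 + q * n2) loop_cat p n1 n2 c1 c2 i)%:~R
                   / (p * n1 + q * n2)%:R :> R.
  exact: loop_rep_mean_weight gl gc.
have den_neq0 : (denq r)%:~R != 0 :> R by rewrite intr_eq0 denq_neq0.
have N_neq0 : (p * n1 + q * n2)%:R != 0 :> R by rewrite pnatr_eq0 -lt0n.
rewrite sum_loop_cat //; apply/eqP; rewrite eqr_div //.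
rewrite -[(p * n1 + q * n2)%:R]/((p * n1 + q * n2)%:Z)%:~R -!intrM eqr_int.
by rewrite pq_mean.
Qed.

Theorem mainTheorem14 (R : realType) (T : topologicalType)
  (h : R -> T) (tau F : T -> T) (L : finType) (xi : L -> R -> T)
  (P : finType) (br : P -> L) (a b : P -> R) (lab : P -> L) (pp : P -> int) :
  lifted_graph h tau ->
  continuous F ->
  degree_one tau F ->
  sun_like h F xi ->
  basic_partition h tau F xi br a b lab pp ->
  (* (i) *)
  (forall (al : set (seq P)) (n1 n2 : nat) (g1 g2 : nat -> set (seq P))
          (r1 r2 r : R),
     loop_at h tau F xi br a b pp al n1 g1 ->
     loop_at h tau F xi br a b pp al n2 g2 ->
     has_rho h tau F xi br a b pp (loop_rep n1 g1) r1 ->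
     has_rho h tau F xi br a b pp (loop_rep n2 g2) r2 ->
     r1 <= r <= r2 -> (exists q : rat, r = ratr q) ->
     exists (n : nat) (g : nat -> set (seq P)),
       loop_at h tau F xi br a b pp al n g /\
       has_rho h tau F xi br a b pp (loop_rep n g) r) /\
  (* (ii) *)
  (forall (al : set (seq P)) (ns : nat -> nat) (gs : nat -> nat -> set (seq P))
          (rhos : nat -> R) (s : R),
     vertex h tau F xi br a b al ->
     (forall k, loop_at h tau F xi br a b pp al (ns k) (gs k)) ->
     (forall k, has_rho h tau F xi br a b pp (loop_rep (ns k) (gs k)) (rhos k)) ->
     rhos @ \oo --> s ->
     exists path : nat -> set (seq P),
       [/\ path 0%N = al,
           (forall N, exists2 m, (N <= m)%N & path m = al) &
           has_rho h tau F xi br a b pp path s]).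
Proof.
move=> _ _ _ _ _.
have weight_le x y w : arrow h tau F xi br a b pp x y w -> `|w| <= \sum_(B : P) `|pp B|.
  by case=> _ _ [s' [B [A [_ [_ ->]]]]]; rewrite (bigD1 B) //= lerDl sumr_ge0.
split=> [al n1 n2 g1 g2 r1 r2 r gl1 gl2 mw1 mw2 r_between [q r_eq]|].
  by move: r_between; rewrite r_eq; exact: rational_mean_loop weight_le gl1 gl2 mw1 mw2.
move=> al ns gs rhos s _ loops mws rhos_s.
exact: (limit_mean_path weight_le loops mws rhos_s).
Qed.
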